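(* Let $\lambda\in\mathbb{R}\setminus\{0\}$ and $x_1,x_2,y_1,y_2\in\mathbb{R}$. Then for every integer $n\ge0$, \[ C_{n,\lambda}(x_1+x_2,y_1+y_2)=\sum_{k=0}^{n}\binom{n}{k}\Big\{C_{n-k,\lambda}(x_1,y_1)C_{k,\lambda}(x_2,y_2)-S_{n-k,\lambda}(x_1,y_1)S_{k,\lambda}(x_2,y_2)\Big\} \] and \[ S_{n,\lambda}(x_1+x_2,y_1+y_2)=\sum_{k=0}^{n}\binom{n}{k}\Big\{S_{n-k,\lambda}(x_1,y_1)C_{k,\lambda}(x_2,y_2)+C_{n-k,\lambda}(x_1,y_1)S_{k,\lambda}(x_2,y_2)\Big\}. \]
   Context: All generating functions are formal power series in $t$. For $z\in\mathbb{C}$: $(z)_{0,\lambda}=1$ and $(z)_{n,\lambda}=z(z-\lambda)\cdots(z-(n-1)\lambda)$ for $n\ge1$. The degenerate exponential is $e_\lambda^{z}(t)=\sum_{n\ge0}(z)_{n,\lambda}\frac{t^n}{n!}$ (i.e. $(1+\lambda t)^{z/\lambda}$). The degenerate cosine and sine are $\cos_\lambda^{(y)}(t)=\frac{e_\lambda^{iy}(t)+e_\lambda^{-iy}(t)}{2}$ and $\sin_\lambda^{(y)}(t)=\frac{e_\lambda^{iy}(t)-e_\lambda^{-iy}(t)}{2i}$. The degenerate two-parametric polynomials $C_{n,\lambda}(x,y)$ and $S_{n,\lambda}(x,y)$ are defined by $e_\lambda^{x}(t)\cos_\lambda^{(y)}(t)=\sum_{n\ge0}C_{n,\lambda}(x,y)\frac{t^n}{n!}$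 and $e_\lambda^{x}(t)\sin_\lambda^{(y)}(t)=\sum_{n\ge0}S_{n,\lambda}(x,y)\frac{t^n}{n!}$. *)

From HB Require Import structures.
From mathcomp Require Import all_boot all_order all_algebra.
From mathcomp Require Import complex.
From mathcomp Require Import reals.
Set Implicit Arguments. Unset Strict Implicit. Unset Printing Implicit Defensive.
Import Order.TTheory GRing.Theory Num.Theory.
Local Open Scope ring_scope.
Local Open Scope complex_scope.

Section Degenerate.
Variable R : realType.
Local Notation C := (R[i]).

(* Formal power series in t are represented by their coefficient sequences
   nat -> C (f = \sum_n f n t^n); product = Cauchy product. *)
Definition fps_mul (f g : nat -> C) : nat -> C :=
  fun n => \sum_(k < n.+1) f k * g (n - k)%N.

Definition dfall (lam z : C) (n : nat) : C :=
  \prod_(i < n) (z - i%:R * lam).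

Definition dexp (lam z : C) : nat -> C :=
  fun n => dfall lam z n / (n`!)%:R.

Definition dcos (lam y : C) : nat -> C :=
  fun n => (dexp lam ('i * y) n + dexp lam (- ('i * y)) n) / 2.
Definition dsin (lam y : C) : nat -> C :=
  fun n => (dexp lam ('i * y) n - dexp lam (- ('i * y)) n) / (2 * 'i).

Definition Cpoly (lam : R) (n : nat) (x y : R) : C :=
  (n`!)%:R * fps_mul (dexp lam%:C x%:C) (dcos lam%:C y%:C) n.
Definition Spoly (lam : R) (n : nat) (x y : R) : C :=
  (n`!)%:R * fps_mul (dexp lam%:C x%:C) (dsin lam%:C y%:C) n.

End Degenerate.

From HB Require Import structures.
From mathcomp Require Import all_boot all_order all_algebra.
From mathcomp Require Import complex.
From mathcomp Require Import reals.
From mathcomp Require Import ring.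
Set Implicit Arguments. Unset Strict Implicit. Unset Printing Implicit Defensive.
Import Order.TTheory GRing.Theory Num.Theory.
Local Open Scope ring_scope.
Local Open Scope complex_scope.

(* Cutting a power series in t off at degree N gives a polynomial, and products of
   such truncations agree with the Cauchy product below degree N.  The degenerate
   Vandermonde identity (a + b)_{n,l} = sum_k C(n,k) (a)_{n-k,l} (b)_{k,l} gives
   e_l^(a+b) = e_l^a e_l^b; writing cos_l and sin_l in Euler form, both addition
   formulas then become ring identities between truncations.  Finally, n! times
   the n-th coefficient of p q is the binomial convolution of the sequences
   m! p_m and m! q_m. *)

Section BinomialConvolution.
Variable T : comPzSemiRingType.
Implicit Types u v : nat -> T.

Definition binconv u v n : T := \sum_(k < n.+1) 'C(n, k)%:R * (u (n - k)%N * v k).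

Lemma binconv0 u v : binconv u v 0 = u 0%N * v 0%N.
Proof. by rewrite /binconv big_ord1 mul1r. Qed.

Lemma binconvS u v n :
  binconv u v n.+1 = binconv (fun k => u k.+1) v n + binconv u (fun k => v k.+1) n.
Proof.
rewrite /binconv big_ord_recl bin0 mul1r subn0.
under eq_bigr => k _ do rewrite binS natrD mulrDl.
rewrite big_split /= addrA; congr (_ + _).
rewrite big_ord_recr /= bin_small // mul0r addr0 [RHS]big_ord_recl bin0 mul1r subn0.
by congr (_ + _); apply: eq_bigr => k _; rewrite /bump /= add1n -subSn.
Qed.

Lemma eq_binconv u u' v v' n :
  u =1 u' -> v =1 v' -> binconv u v n = binconv u' v' n.
Proof. by move=> eu ev; apply: eq_bigr => k _; rewrite eu ev. Qed.

Lemma binconvMl c u v n : binconv (fun k => c * u k) v n = c * binconv u v n.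
Proof. by rewrite /binconv mulr_sumr; apply: eq_bigr => k _; ring. Qed.

Lemma binconvMr c u v n : binconv u (fun k => c * v k) n = c * binconv u v n.
Proof. by rewrite /binconv mulr_sumr; apply: eq_bigr => k _; ring. Qed.

End BinomialConvolution.

Lemma binconv_coefM (T : comNzSemiRingType) (p q : {poly T}) (u v : nat -> T) n :
    (forall m, (m <= n)%N -> u m = m`!%:R * p`_m) ->
    (forall m, (m <= n)%N -> v m = m`!%:R * q`_m) ->
  binconv u v n = n`!%:R * (p * q)`_n.
Proof.
move=> pu qv; rewrite coefMr mulr_sumr.
apply: eq_bigr => -[k /=]; rewrite ltnS => le_kn _.
rewrite pu ?leq_subr // qv // -(bin_fact le_kn) !natrM; ring.
Qed.

Lemma coef_take_polyM (T : nzSemiRingType) N (p q : {poly T}) i : (i < N)%N ->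
  (take_poly N p * take_poly N q)`_i = (p * q)`_i.
Proof.
move=> lt_iN; rewrite !coefM; apply: eq_bigr => -[j /= le_ji] _.
by rewrite !coef_take_poly (leq_ltn_trans (leq_subr j i)) // (leq_ltn_trans _ lt_iN).
Qed.

Lemma take_polyMC (T : nzSemiRingType) N (p : {poly T}) c :
  take_poly N (p * c%:P) = take_poly N p * c%:P.
Proof. by apply/polyP => i; rewrite !(coefMC, coef_take_poly); case: ifP; rewrite ?mul0r. Qed.

Definition trunc (T : nzSemiRingType) N (f : nat -> T) : {poly T} := \poly_(i < N) f i.

(* Read a = e^{iy}, b = e^{-iy}, h = 1/2, j = 1/(2i) and e = e^x: then (a + b) h
   and (a - b) j are cos y and sin y. *)
Lemma expcos_addition (T : comPzRingType) (h j e1 e2 a1 a2 b1 b2 : T) :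
    h *+ 2 = 1 -> j ^+ 2 = - h ^+ 2 ->
  e1 * e2 * ((a1 * a2 + b1 * b2) * h) =
    e1 * ((a1 + b1) * h) * (e2 * ((a2 + b2) * h))
    - e1 * ((a1 - b1) * j) * (e2 * ((a2 - b2) * j)).
Proof.
move=> h2 j2; apply/eqP; rewrite -subr_eq0.
have -> : e1 * e2 * ((a1 * a2 + b1 * b2) * h) -
    (e1 * ((a1 + b1) * h) * (e2 * ((a2 + b2) * h))
     - e1 * ((a1 - b1) * j) * (e2 * ((a2 - b2) * j))) =
    e1 * e2 * (a1 * a2 + b1 * b2) * h * (1 - h *+ 2)
    + e1 * e2 * (a1 - b1) * (a2 - b2) * (j ^+ 2 + h ^+ 2) by ring.
by rewrite h2 j2 subrr addNr !mulr0 addr0.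
Qed.

Lemma expsin_addition (T : comPzRingType) (h j e1 e2 a1 a2 b1 b2 : T) :
    h *+ 2 = 1 ->
  e1 * e2 * ((a1 * a2 - b1 * b2) * j) =
    e1 * ((a1 - b1) * j) * (e2 * ((a2 + b2) * h))
    + e1 * ((a1 + b1) * h) * (e2 * ((a2 - b2) * j)).
Proof.
move=> h2; apply/eqP; rewrite -subr_eq0.
have -> : e1 * e2 * ((a1 * a2 - b1 * b2) * j) -
    (e1 * ((a1 - b1) * j) * (e2 * ((a2 + b2) * h))
     + e1 * ((a1 + b1) * h) * (e2 * ((a2 - b2) * j))) =
    e1 * e2 * (a1 * a2 - b1 * b2) * j * (1 - h *+ 2) by ring.
by rewrite h2 subrr mulr0.
Qed.

Section DegenerateSeries.
Variable R : realType.
Local Notation C := R[i].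
Implicit Types (l a b z : C) (f g : nat -> C).

Lemma dfallS l z n : dfall l z n.+1 = z * dfall l (z - l) n.
Proof.
rewrite /dfall big_ord_recl mul0r subr0; congr (_ * _).
by apply: eq_bigr => i _; rewrite lift0 -natr1; ring.
Qed.

Lemma dfallD l a b n : dfall l (a + b) n = binconv (dfall l a) (dfall l b) n.
Proof.
elim: n a b => [|n IHn] a b; first by rewrite binconv0 /dfall !big_ord0 mulr1.
rewrite dfallS binconvS (eq_binconv _ (dfallS l a) (frefl _)).
rewrite (eq_binconv _ (frefl _) (dfallS l b)) binconvMl binconvMr -!IHn.
by rewrite [a - l + b]addrAC addrA -mulrDl.
Qed.

Lemma natr_fact_neq0 n : n`!%:R != 0 :> C.
Proof. by rewrite pnatr_eq0 -lt0n fact_gt0. Qed.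

Lemma dexpD l a b n : dexp l (a + b) n = fps_mul (dexp l a) (dexp l b) n.
Proof.
rewrite /fps_mul /dexp addrC dfallD /binconv mulr_suml.
apply: eq_bigr => -[k /=]; rewrite ltnS => le_kn _.
rewrite -(bin_fact le_kn) !natrM; field.
by rewrite !natr_fact_neq0 pnatr_eq0 -lt0n bin_gt0.
Qed.

Variable N : nat.
Local Notation tr := (trunc N).

Lemma coef_truncM f g i : (i < N)%N -> (tr f * tr g)`_i = fps_mul f g i.
Proof.
move=> lt_iN; rewrite coefM; apply: eq_bigr => -[j /=]; rewrite ltnS => le_ji _.
by rewrite !coef_poly (leq_ltn_trans (leq_subr j i)) // (leq_ltn_trans le_ji).
Qed.

Lemma trunc_dexpD l a b :
  tr (dexp l (a + b)) = take_poly N (tr (dexp l a) * tr (dexp l b)).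
Proof.
apply/polyP => i; rewrite coef_take_poly coef_poly.
by case: ifP => // lt_iN; rewrite dexpD coef_truncM.
Qed.

Lemma trunc_dcos l y :
  tr (dcos l y) = (tr (dexp l ('i * y)) + tr (dexp l (- ('i * y)))) * (2^-1)%:P.
Proof.
by apply/polyP => i; rewrite coefMC coefD !coef_poly; case: ifP; rewrite ?addr0 ?mul0r.
Qed.

Lemma trunc_dsin l y :
  tr (dsin l y) = (tr (dexp l ('i * y)) - tr (dexp l (- ('i * y)))) * ((2 * 'i)^-1)%:P.
Proof.
by apply/polyP => i; rewrite coefMC coefB !coef_poly; case: ifP; rewrite ?subr0 ?mul0r.
Qed.

Lemma polyC_half_mulrn2 : (2^-1 : C)%:P *+ 2 = 1.
Proof. by rewrite -polyCMn -[2^-1 *+ 2]mulr_natr mulVf ?pnatr_eq0. Qed.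

Lemma polyC_inv2i_sqr : ((2 * 'i)^-1 : C)%:P ^+ 2 = - (2^-1 : C)%:P ^+ 2.
Proof.
rewrite -!(rmorphXn polyC) -polyCN; congr _%:P.
by rewrite !exprVn exprMn sqr_i mulrN1 invrN.
Qed.

Lemma coef_trunc_dexp_dcosD l a1 a2 b1 b2 i : (i < N)%N ->
  (tr (dexp l (a1 + a2)) * tr (dcos l (b1 + b2)))`_i =
  (tr (dexp l a1) * tr (dcos l b1) * (tr (dexp l a2) * tr (dcos l b2))
   - tr (dexp l a1) * tr (dsin l b1) * (tr (dexp l a2) * tr (dsin l b2)))`_i.
Proof.
move=> lt_iN.
rewrite trunc_dcos mulrDr opprD !trunc_dexpD -linearD -take_polyMC.
rewrite coef_take_polyM // !trunc_dcos !trunc_dsin.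
by rewrite (expcos_addition _ _ _ _ _ _ polyC_half_mulrn2 polyC_inv2i_sqr).
Qed.

Lemma coef_trunc_dexp_dsinD l a1 a2 b1 b2 i : (i < N)%N ->
  (tr (dexp l (a1 + a2)) * tr (dsin l (b1 + b2)))`_i =
  (tr (dexp l a1) * tr (dsin l b1) * (tr (dexp l a2) * tr (dcos l b2))
   + tr (dexp l a1) * tr (dcos l b1) * (tr (dexp l a2) * tr (dsin l b2)))`_i.
Proof.
move=> lt_iN.
rewrite trunc_dsin mulrDr opprD !trunc_dexpD -linearB -take_polyMC.
rewrite coef_take_polyM // !trunc_dcos !trunc_dsin.
by rewrite (expsin_addition _ _ _ _ _ _ _ polyC_half_mulrn2).
Qed.

Lemma Cpoly_coef (lam x y : R) m : (m < N)%N ->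
  Cpoly lam m x y = m`!%:R * (tr (dexp lam%:C x%:C) * tr (dcos lam%:C y%:C))`_m.
Proof. by move=> lt_mN; rewrite coef_truncM. Qed.

Lemma Spoly_coef (lam x y : R) m : (m < N)%N ->
  Spoly lam m x y = m`!%:R * (tr (dexp lam%:C x%:C) * tr (dsin lam%:C y%:C))`_m.
Proof. by move=> lt_mN; rewrite coef_truncM. Qed.

End DegenerateSeries.

Theorem theorem7 (R : realType) (lam : R) (hlam : lam != 0)
    (x1 x2 y1 y2 : R) (n : nat) :
  Cpoly lam n (x1 + x2) (y1 + y2) =
    \sum_(k < n.+1) ('C(n, k))%:R *
      (Cpoly lam (n - k)%N x1 y1 * Cpoly lam k x2 y2
       - Spoly lam (n - k)%N x1 y1 * Spoly lam k x2 y2)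
  /\
  Spoly lam n (x1 + x2) (y1 + y2) =
    \sum_(k < n.+1) ('C(n, k))%:R *
      (Spoly lam (n - k)%N x1 y1 * Cpoly lam k x2 y2
       + Cpoly lam (n - k)%N x1 y1 * Spoly lam k x2 y2).
Proof.
pose egfC x y := Cpoly_coef (N := n.+1) lam x y.
pose egfS x y := Spoly_coef (N := n.+1) lam x y.
rewrite (egfC _ _ n) ?(egfS _ _ n) // !raddfD /=.
rewrite coef_trunc_dexp_dcosD // coef_trunc_dexp_dsinD // coefB coefD !mulrDr mulrN.
rewrite -(binconv_coefM (egfC x1 y1) (egfC x2 y2)) -(binconv_coefM (egfS x1 y1) (egfS x2 y2)).
rewrite -(binconv_coefM (egfS x1 y1) (egfC x2 y2)) -(binconv_coefM (egfC x1 y1) (egfS x2 y2)).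
by rewrite /binconv -sumrB -big_split; split; apply: eq_bigr => k _; rewrite ?mulrBr ?mulrDr.
Qed.
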